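(* Let $S$ be a finite set with labelling $\ell:S\to L$. For all transition functions $\sigma,\tau:S\to\mathcal{D}(S)$ and every $S^2_\Delta$-closed policy $P\in\mathcal{P}_\sigma$, there exists an $S^2_\Delta$-closed policy $Q\in\mathcal{P}_\tau$ such that $d_F(P,Q)\le 2\,d_F(\sigma,\tau)$.
   Context: $\mathcal{D}(Y)$ = probability distributions on $Y$; $\Omega(\mu,\nu)$ = couplings of $\mu,\nu$ (distributions on $S\times S$ with marginals $\mu,\nu$). $S^2_\Delta=\{(s,s)\mid s\in S\}$, $S^2_1=\{(s,t)\mid\ell(s)\ne\ell(t)\}$. For a transition function $\tau$, $\mathcal{P}_\tau$ is the set of maps $P:S\times S\to\mathcal{D}(S\times S)$ with $P(s,t)\in\Omega(\tau(s),\tau(t))$ for $(s,t)\notin S^2_1$ and $P(s,t)$ the point mass at $(s,t)$ for $(s,t)\in S^2_1$. $P$ is $S^2_\Delta$-closed if $\mathrm{support}(P(s,s))\subseteq S^2_\Delta$ for all $s$. For distributions $\alpha,\beta$ on a finite set $Y$, $d_{TV}(\alpha,\beta)=\max_{y}|\alpha(y)-\beta(y)|$; for functions $f,g$ with values in distributions, $d_F(f,g)=\max_x d_{TV}(f(x),g(x))$ (so $d_F(\sigma,\tau)=\max_{s}d_{TV}(\sigma(s),\tau(s))$ and $d_F(P,Q)=\max_{(s,t)}d_{TV}(P(s,t),Q(s,t))$). *)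

From mathcomp Require Import all_boot all_order all_algebra.
From mathcomp Require Import reals.
Set Implicit Arguments. Unset Strict Implicit. Unset Printing Implicit Defensive.
Import Order.TTheory GRing.Theory Num.Theory.
Local Open Scope ring_scope.

Section Defs.
Variable R : realType.

Definition is_dist (Y : finType) (a : {ffun Y -> R}) : Prop :=
  (forall y, 0 <= a y) /\ \sum_(y : Y) a y = 1.

Definition is_coupling (S : finType) (mu nu : {ffun S -> R})
    (w : {ffun (S * S)%type -> R}) : Prop :=
  is_dist w /\
  (forall s, \sum_(t : S) w (s, t) = mu s) /\
  (forall t, \sum_(s : S) w (s, t) = nu t).

Definition dirac (Y : finType) (y0 : Y) : {ffun Y -> R} :=
  [ffun y => if y == y0 then 1 else 0].

Definition S2_1 (S : finType) (L : eqType) (l : S -> L) (p : S * S) : bool :=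
  l p.1 != l p.2.

Definition is_policy (S : finType) (L : eqType) (l : S -> L)
    (tau : S -> {ffun S -> R}) (P : S * S -> {ffun (S * S)%type -> R}) : Prop :=
  forall s t,
    (~~ S2_1 l (s, t) -> is_coupling (tau s) (tau t) (P (s, t))) /\
    (S2_1 l (s, t) -> P (s, t) = dirac (s, t)).

Definition diag_closed (S : finType) (P : S * S -> {ffun (S * S)%type -> R}) : Prop :=
  forall s u v, P (s, s) (u, v) != 0 -> u = v.

(* Total variation distance, as defined in the paper: max pointwise difference. *)
Definition dTV (Y : finType) (a b : {ffun Y -> R}) : R :=
  \big[Num.max/0]_(y : Y) `|a y - b y|.

Definition dF (X Y : finType) (f g : X -> {ffun Y -> R}) : R :=
  \big[Num.max/0]_(x : X) dTV (f x) (g x).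

Definition is_transition (S : finType) (tau : S -> {ffun S -> R}) : Prop :=
  forall s, is_dist (tau s).

End Defs.

From mathcomp Require Import all_boot all_order all_algebra.
From mathcomp Require Import reals.
From mathcomp Require Import lra.
Set Implicit Arguments. Unset Strict Implicit. Unset Printing Implicit Defensive.
Import Order.TTheory GRing.Theory Num.Theory.
Local Open Scope ring_scope.

(* A coupling [w] of [mu] and [nu] can be turned into a coupling of [mu'] and
   [nu] by moving at most [|mu u - mu' u|] of mass in each entry: shrink every
   row [u] with [mu u > mu' u] proportionally to [mu' u], and hand out the
   removed mass of each column to the rows with [mu u < mu' u] in proportion to
   their deficit.  Doing this once on rows (sigma s to tau s) and once on
   columns (sigma t to tau t) changes each entry of [P (s, t)] by at most
   [2 d_F(sigma, tau)].  On the diagonal, an [S^2_Delta]-closed coupling of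
   [sigma s] with itself is forced to be the diagonal plan of [sigma s], and is
   replaced by the diagonal plan of [tau s]. *)

Section TransportPlans.
Variables (R : realType) (I J : finType).
Implicit Types (a b m : {ffun I -> R}) (n : {ffun J -> R}).

Definition is_transport (w : {ffun (I * J)%type -> R}) m n : Prop :=
  [/\ forall p, 0 <= w p,
      forall i, \sum_j w (i, j) = m i &
      forall j, \sum_i w (i, j) = n j].

Lemma transport_le_row w m n i j : is_transport w m n -> w (i, j) <= m i.
Proof.
case=> w_ge0 w_rows _; rewrite -w_rows (bigD1 j) //= lerDl.
by apply: sumr_ge0 => k _; exact: w_ge0.
Qed.

Lemma transport_row_ge0 w m n i : is_transport w m n -> 0 <= m i.
Proof.
by case=> w_ge0 w_rows _; rewrite -w_rows; apply: sumr_ge0 => j _; exact: w_ge0.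
Qed.

Definition excess a b i := a i - Num.min (a i) (b i).

Lemma excess_ge0 a b i : 0 <= excess a b i.
Proof. by rewrite subr_ge0 ge_min lexx. Qed.

Lemma excess_le_dist a b i : excess a b i <= `|a i - b i|.
Proof.
by rewrite /excess; have [_|_] := leP (a i) (b i); rewrite ?subrr ?ler_norm.
Qed.

Lemma min_add_excess a b i : Num.min (a i) (b i) + excess a b i = a i.
Proof. exact: subrKC. Qed.

Lemma sum_excessC a b :
  \sum_i a i = \sum_i b i -> \sum_i excess a b i = \sum_i excess b a i.
Proof.
move=> sum_ab; apply/eqP; rewrite -subr_eq0 -sumrB.
under eq_bigr => i _ do rewrite /excess minC opprB addrA subrK.
by rewrite sumrB sum_ab subrr.
Qed.

Definition excess_total m m' := \sum_i excess m m' i.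

Lemma excess_total_ge0 a b : 0 <= excess_total a b.
Proof. by apply: sumr_ge0 => i _; exact: excess_ge0. Qed.

Definition moved_mass m m' (w : {ffun (I * J)%type -> R}) j :=
  \sum_i w (i, j) * (excess m m' i / m i).

(* Row [i] keeps the fraction [min (m i) (m' i) / m i] of its mass and receives
   the share [excess m' m i / excess_total m m'] of the mass removed from each
   column.  A division by zero (giving 0) only occurs for an empty row or when
   no mass needs to move, where the term it guards vanishes anyway. *)
Definition rebalance m m' (w : {ffun (I * J)%type -> R}) : {ffun (I * J)%type -> R} :=
  [ffun p => w p * (Num.min (m p.1) (m' p.1) / m p.1)
             + excess m' m p.1 / excess_total m m' * moved_mass m m' w p.2].

Section Rebalance.
Variables (m m' : {ffun I -> R}) (n : {ffun J -> R}) (w : {ffun (I * J)%type -> R}).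
Hypotheses (w_plan : is_transport w m n) (m'_ge0 : forall i, 0 <= m' i)
           (same_mass : \sum_i m i = \sum_i m' i).

Let Z := excess_total m m'.

Lemma mul_div_row i x : (m i = 0 -> x = 0) -> m i * (x / m i) = x.
Proof.
by have [-> x0|mi0 _] := eqVneq (m i) 0; [rewrite mul0r x0 | rewrite mulrC divfK].
Qed.

Lemma excess_row_ratio i : m i * (excess m m' i / m i) = excess m m' i.
Proof. by apply: mul_div_row => mi0; rewrite /excess mi0 min_l ?subrr. Qed.

Lemma split_entry i j :
  w (i, j) * (Num.min (m i) (m' i) / m i) + w (i, j) * (excess m m' i / m i)
  = w (i, j).
Proof.
have [mi0|mi0] := eqVneq (m i) 0.
  have wij0 : w (i, j) = 0.
    apply/le_anti; rewrite -{1}mi0 (transport_le_row _ _ w_plan) /=.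
    by case: w_plan.
  by rewrite wij0 !mul0r addr0.
by rewrite -mulrDr -mulrDl min_add_excess divff ?mulr1.
Qed.

Lemma moved_entry_bound i j :
  0 <= w (i, j) * (excess m m' i / m i) <= excess m m' i.
Proof.
have [w_ge0 _ _] := w_plan; have mi_ge0 := transport_row_ge0 i w_plan.
have ratio_ge0 : 0 <= excess m m' i / m i by rewrite divr_ge0 ?excess_ge0.
rewrite mulr_ge0 //= -{2}excess_row_ratio ler_wpM2r //.
exact: transport_le_row w_plan.
Qed.

Lemma moved_mass_bound j : 0 <= moved_mass m m' w j <= Z.
Proof.
rewrite sumr_ge0 => [|i _]; last by case/andP: (moved_entry_bound i j).
by rewrite ler_sum // => i _; case/andP: (moved_entry_bound i j).
Qed.

Lemma sum_moved_mass : \sum_j moved_mass m m' w j = Z.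
Proof.
rewrite /moved_mass exchange_big; apply: eq_bigr => i _ /=.
by have [_ w_rows _] := w_plan; rewrite -mulr_suml w_rows excess_row_ratio.
Qed.

Lemma deficit_share i : excess m' m i / Z * Z = excess m' m i.
Proof.
have [Z0|Z0] := eqVneq Z 0; last by rewrite divfK.
rewrite Z0 mulr0; apply/esym/(@psumr_eq0P _ _ predT (excess m' m)) => //.
  by move=> k _; exact: excess_ge0.
by rewrite -sum_excessC.
Qed.

Lemma sum_deficit_share x : 0 <= x <= Z -> (\sum_i excess m' m i / Z) * x = x.
Proof.
case/andP=> x_ge0 x_leZ; have [Z0|Z0] := eqVneq Z 0.
  have -> : x = 0 by apply/le_anti; rewrite -{1}Z0 x_leZ.
  by rewrite mulr0.
by rewrite -mulr_suml -sum_excessC // divff ?mul1r.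
Qed.

Lemma rebalance_transport : is_transport (rebalance m m' w) m' n.
Proof.
have [w_ge0 w_rows w_cols] := w_plan.
split.
- case=> i j; rewrite ffunE /=; apply: addr_ge0.
    by rewrite mulr_ge0 ?divr_ge0 ?le_min ?m'_ge0 ?(transport_row_ge0 i w_plan).
  apply: mulr_ge0; last by case/andP: (moved_mass_bound j).
  by rewrite divr_ge0 ?excess_ge0 ?excess_total_ge0.
- move=> i; under eq_bigr => j _ do rewrite ffunE /=.
  rewrite big_split /= -!mulr_suml -mulr_sumr w_rows sum_moved_mass deficit_share.
  rewrite mul_div_row; first by rewrite minC min_add_excess.
  by move=> ->; rewrite min_l.
- move=> j; under eq_bigr => i _ do rewrite ffunE /=.
  rewrite big_split /= -mulr_suml sum_deficit_share ?moved_mass_bound //.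
  rewrite -w_cols -big_split /=; apply: eq_bigr => i _; exact: split_entry.
Qed.

Lemma rebalance_close (e : R) :
  (forall i, `|m i - m' i| <= e) -> forall p, `|rebalance m m' w p - w p| <= e.
Proof.
move=> close [i j]; rewrite ffunE /=.
have [lost_ge0 lost_le] := andP (moved_entry_bound i j).
have [moved_ge0 moved_le] := andP (moved_mass_bound j).
set gained := excess m' m i / Z * moved_mass m m' w j.
have gained_ge0 : 0 <= gained.
  by rewrite mulr_ge0 ?divr_ge0 ?excess_ge0 ?excess_total_ge0.
have gained_le : gained <= excess m' m i.
  by rewrite -[leRHS]deficit_share ler_wpM2l ?divr_ge0 ?excess_ge0 ?excess_total_ge0.
have lost_le_e := le_trans lost_le (le_trans (excess_le_dist m m' i) (close i)).
have gained_le_e : gained <= e.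
  by rewrite (le_trans gained_le) // (le_trans (excess_le_dist m' m i)) // distrC.
have := split_entry i j; rewrite ler_norml; lra.
Qed.

End Rebalance.

End TransportPlans.

Section Transpose.
Variables (R : realType) (I J : finType).

Definition transpose_plan (w : {ffun (I * J)%type -> R}) : {ffun (J * I)%type -> R} :=
  [ffun p => w (p.2, p.1)].

Lemma transport_transpose (w : {ffun (I * J)%type -> R}) m n :
  is_transport w m n -> is_transport (transpose_plan w) n m.
Proof.
case=> w_ge0 w_rows w_cols; split => [p|j|i]; rewrite ?ffunE //.
- by rewrite -w_cols; apply: eq_bigr => i _; rewrite ffunE.
- by rewrite -w_rows; apply: eq_bigr => j _; rewrite ffunE.
Qed.

End Transpose.

Section Recouple.
Variables (R : realType) (I J : finType).
Variables (m m' : {ffun I -> R}) (n n' : {ffun J -> R}) (w : {ffun (I * J)%type -> R}).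
Hypotheses (w_plan : is_transport w m n)
           (m'_ge0 : forall i, 0 <= m' i) (n'_ge0 : forall j, 0 <= n' j)
           (same_mass_m : \sum_i m i = \sum_i m' i)
           (same_mass_n : \sum_j n j = \sum_j n' j).

Definition recouple : {ffun (I * J)%type -> R} :=
  transpose_plan (rebalance n n' (transpose_plan (rebalance m m' w))).

Lemma recouple_transport : is_transport recouple m' n'.
Proof.
apply: transport_transpose; apply: rebalance_transport => //.
exact/transport_transpose/rebalance_transport.
Qed.

Lemma recouple_close (e1 e2 : R) :
  (forall i, `|m i - m' i| <= e1) -> (forall j, `|n j - n' j| <= e2) ->
  forall p, `|recouple p - w p| <= e1 + e2.
Proof.
move=> close_m close_n [i j]; rewrite ffunE /=.
set w1 := rebalance m m' w; set w1T := transpose_plan w1.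
have w1T_plan : is_transport w1T n m'.
  exact/transport_transpose/rebalance_transport.
have step2 := rebalance_close w1T_plan n'_ge0 same_mass_n close_n (j, i).
have step1 := rebalance_close w_plan m'_ge0 same_mass_m close_m (i, j).
rewrite [w1T _]ffunE /= in step2.
by rewrite [e1 + e2]addrC (le_trans (ler_distD (w1 (i, j)) _ _)) // lerD.
Qed.

End Recouple.

Section SquarePlans.
Variables (R : realType) (S : finType).
Implicit Types (m n : {ffun S -> R}) (w : {ffun (S * S)%type -> R}).

Lemma couplingP m n w : is_dist m -> is_coupling m n w <-> is_transport w m n.
Proof.
case=> _ m_mass; split=> [[[w_ge0 _] [w_rows w_cols]] | [w_ge0 w_rows w_cols]] //.
split=> //; split=> //; rewrite -m_mass -(eq_bigr _ (fun u _ => w_rows u)).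
by rewrite pair_bigA; apply: eq_bigr; case.
Qed.

Definition diag_plan m : {ffun (S * S)%type -> R} :=
  [ffun p => if p.1 == p.2 then m p.1 else 0].

Lemma transport_diag_plan m : (forall s, 0 <= m s) -> is_transport (diag_plan m) m m.
Proof.
move=> m_ge0; split=> [[u v]|u|u]; rewrite ?ffunE /=; first by case: eqP.
- rewrite (bigD1 u) //= ffunE eqxx big1 ?addr0 // => v /negPf vu.
  by rewrite ffunE /= eq_sym vu.
- rewrite (bigD1 u) //= ffunE eqxx big1 ?addr0 // => v /negPf vu.
  by rewrite ffunE /= vu.
Qed.

Lemma diag_supported_transport w m n :
  is_transport w m n -> (forall u v, w (u, v) != 0 -> u = v) -> w = diag_plan m.
Proof.
case=> _ w_rows _ w_diag.
have off_diag u v : u != v -> w (u, v) = 0.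
  by move=> uv; apply/eqP; apply: contraNT uv => /w_diag ->.
apply/ffunP=> -[u v]; rewrite ffunE /=; case: eqVneq => [<-|]; last exact: off_diag.
rewrite -w_rows (bigD1 u) //= big1 ?addr0 // => k ku.
by apply: off_diag; rewrite eq_sym.
Qed.

Lemma diag_plan_close m n (e : R) :
  0 <= e -> (forall s, `|m s - n s| <= e) ->
  forall p, `|diag_plan m p - diag_plan n p| <= e.
Proof. by move=> e_ge0 close p; rewrite !ffunE; case: eqP; rewrite ?subrr ?normr0. Qed.

End SquarePlans.

Section DistanceF.
Variables (R : realType) (X Y : finType) (f g : X -> {ffun Y -> R}).

Lemma dF_ge0 : 0 <= dF f g.
Proof. exact: bigmax_ge_id. Qed.

Lemma entry_le_dF x y : `|f x y - g x y| <= dF f g.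
Proof.
apply: le_trans (le_bigmax _ _ x).
exact: (le_bigmax _ (fun y => `|f x y - g x y|) y).
Qed.

Lemma dF_le (c : R) : 0 <= c -> (forall x y, `|f x y - g x y| <= c) -> dF f g <= c.
Proof. by move=> c_ge0 close; do 2![apply: bigmax_le => // ? _]. Qed.

End DistanceF.

Section TransferPolicy.
Variables (R : realType) (S : finType) (L : eqType) (l : S -> L).
Variables (sigma tau : S -> {ffun S -> R}) (P : S * S -> {ffun (S * S)%type -> R}).
Hypotheses (sigma_trans : is_transition sigma) (tau_trans : is_transition tau)
           (P_policy : is_policy l sigma P) (P_diag_closed : diag_closed P).

Definition transfer_policy (p : S * S) : {ffun (S * S)%type -> R} :=
  if S2_1 l p then dirac R p
  else if p.1 == p.2 then diag_plan (tau p.1)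
  else recouple (sigma p.1) (tau p.1) (sigma p.2) (tau p.2) (P p).

Let tau_ge0 s : forall u, 0 <= tau s u.
Proof. by case: (tau_trans s). Qed.

Let same_mass s : \sum_u sigma s u = \sum_u tau s u.
Proof. by case: (sigma_trans s) => _ ->; case: (tau_trans s) => _ ->. Qed.

Let close s u : `|sigma s u - tau s u| <= dF sigma tau.
Proof. exact: entry_le_dF. Qed.

Lemma policy_transport s t :
  ~~ S2_1 l (s, t) -> is_transport (P (s, t)) (sigma s) (sigma t).
Proof. by move=> st; apply/(couplingP _ _ (sigma_trans s))/(P_policy s t).1. Qed.

Lemma diag_closed_policy_diag s : P (s, s) = diag_plan (sigma s).
Proof.
have ss : ~~ S2_1 l (s, s) by rewrite /S2_1 eqxx.
exact: diag_supported_transport (policy_transport ss) (@P_diag_closed s).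
Qed.

Lemma transfer_policy_is_policy : is_policy l tau transfer_policy.
Proof.
move=> s t; rewrite /transfer_policy; split=> [st|->] //; rewrite (negPf st) /=.
apply/(couplingP _ _ (tau_trans s)); case: eqP => [<-|_].
  exact: transport_diag_plan.
exact: recouple_transport (policy_transport st) (tau_ge0 s) (tau_ge0 t)
  (same_mass s) (same_mass t).
Qed.

Lemma transfer_policy_diag_closed : diag_closed transfer_policy.
Proof.
move=> s u v; rewrite /transfer_policy /S2_1 /= !eqxx /= ffunE /=.
by case: (u =P v) => // _; rewrite eqxx.
Qed.

Lemma transfer_policy_close : dF P transfer_policy <= 2 * dF sigma tau.
Proof.
have e_ge0 := dF_ge0 sigma tau.
apply: dF_le => [|[s t] p]; first by rewrite mulr_ge0.
have -> : 2 * dF sigma tau = dF sigma tau + dF sigma tau by lra.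
rewrite /transfer_policy; have [st|st] := boolP (S2_1 l (s, t)).
  by rewrite ((P_policy s t).2 st) subrr normr0 addr_ge0.
rewrite /= distrC; case: eqP => [<-|_].
  rewrite diag_closed_policy_diag distrC.
  by rewrite (le_trans (diag_plan_close e_ge0 (close s) p)) // lerDl.
exact: (recouple_close (policy_transport st) (tau_ge0 s) (tau_ge0 t)
  (same_mass s) (same_mass t) (close s) (close t) p).
Qed.

End TransferPolicy.

Theorem mainTheorem13 (R : realType) (S : finType) (L : eqType) (l : S -> L)
    (sigma tau : S -> {ffun S -> R})
    (Hsigma : is_transition sigma) (Htau : is_transition tau)
    (P : S * S -> {ffun (S * S)%type -> R})
    (HP : is_policy l sigma P) (HPd : diag_closed P) :
  exists Q : S * S -> {ffun (S * S)%type -> R},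
    [/\ is_policy l tau Q, diag_closed Q & dF P Q <= 2 * dF sigma tau].
Proof.
exists (transfer_policy l sigma tau P); split.
- exact: transfer_policy_is_policy.
- exact: transfer_policy_diag_closed.
- exact: transfer_policy_close.
Qed.
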